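(* Let $n\geq 1$ and let $T$ be a complete $n$-ary theory. Then $T$ is stable if and only if every $T$-formula with $n$ free variables is stable.
   Context: A formula $\varphi(\bar{x},\bar{y})$ (with a given partition of its free variables into $\bar x$ and $\bar y$) of $T$ is stable if there are no tuples $\bar{a}_k,\bar{b}_k$, $k\in\omega$, in a model of $T$ with $\models\varphi(\bar{a}_i,\bar{b}_j)\Leftrightarrow i\leq j$. A formula is called stable if it is stable for every partition of its free variables; $T$ is stable if every $T$-formula is stable. For $n\geq 1$, a formula of $T$ is $n$-ary if it is $T$-equivalent to a Boolean combination of $T$-formulas each having at most $n$ free variables; $T$ is unary ($1$-ary) if every formula is $T$-equivalent to a Boolean combination of formulas with one free variable and formulas $x\approx y$, and for $n\geq 2$, $T$ is $n$-ary if every $T$-formula is $n$-ary. *)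

From mathcomp Require Import all_boot.
Set Implicit Arguments.
Unset Strict Implicit.
Unset Printing Implicit Defensive.

Record signature := Signature {
  fsym : Type; farity : fsym -> nat;
  rsym : Type; rarity : rsym -> nat }.

Section FOL.
Variable L : signature.

Inductive term : Type :=
| Var : nat -> term
| App : forall f : fsym L, ('I_(farity f) -> term) -> term.

Inductive formula : Type :=
| Fls : formula
| Eq : term -> term -> formula
| Rel : forall r : rsym L, ('I_(rarity r) -> term) -> formula
| Not : formula -> formula
| And : formula -> formula -> formula
| Or : formula -> formula -> formula
| Ex : nat -> formula -> formula
| All : nat -> formula -> formula.

Inductive occurs_term (v : nat) : term -> Prop :=
| occ_var : occurs_term v (Var v)
| occ_app : forall f ts (i : 'I_(farity f)), occurs_term v (ts i) -> occurs_term v (App ts).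

Inductive free_in (v : nat) : formula -> Prop :=
| fr_eql : forall t u, occurs_term v t -> free_in v (Eq t u)
| fr_eqr : forall t u, occurs_term v u -> free_in v (Eq t u)
| fr_rel : forall r ts (i : 'I_(rarity r)), occurs_term v (ts i) -> free_in v (Rel ts)
| fr_not : forall p, free_in v p -> free_in v (Not p)
| fr_andl : forall p q, free_in v p -> free_in v (And p q)
| fr_andr : forall p q, free_in v q -> free_in v (And p q)
| fr_orl : forall p q, free_in v p -> free_in v (Or p q)
| fr_orr : forall p q, free_in v q -> free_in v (Or p q)
| fr_ex : forall w p, w <> v -> free_in v p -> free_in v (Ex w p)
| fr_all : forall w p, w <> v -> free_in v p -> free_in v (All w p).

Definition has_free_vars (n : nat) (phi : formula) : Prop :=
  exists l : seq nat, uniq l /\ size l = n /\ (forall v, free_in v phi <-> v \in l).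

Definition has_at_most_free_vars (n : nat) (phi : formula) : Prop :=
  exists l : seq nat, size l <= n /\ (forall v, free_in v phi -> v \in l).

Definition sentence (phi : formula) : Prop := forall v, ~ free_in v phi.

Record structure := Structure {
  dom :> Type;
  dom_inh : dom;
  funs : forall f : fsym L, ('I_(farity f) -> dom) -> dom;
  rels : forall r : rsym L, ('I_(rarity r) -> dom) -> Prop }.

Fixpoint eval (M : structure) (s : nat -> M) (t : term) : M :=
  match t with
  | Var v => s v
  | App f ts => funs (fun i => eval s (ts i))
  end.

Definition upd (M : structure) (s : nat -> M) (v : nat) (d : M) : nat -> M :=
  fun w => if w == v then d else s w.

Fixpoint sat (M : structure) (s : nat -> M) (phi : formula) : Prop :=
  match phi with
  | Fls => False
  | Eq t u => eval s t = eval s u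
  | Rel r ts => rels (fun i => eval s (ts i))
  | Not p => ~ sat s p
  | And p q => sat s p /\ sat s q
  | Or p q => sat s p \/ sat s q
  | Ex v p => exists d : M, sat (upd s v d) p
  | All v p => forall d : M, sat (upd s v d) p
  end.

Definition theory := formula -> Prop.

Definition is_model (T : theory) (M : structure) : Prop :=
  forall phi, T phi -> forall s : nat -> M, sat s phi.

Definition entails (T : theory) (phi : formula) : Prop :=
  forall M : structure, is_model T M -> forall s : nat -> M, sat s phi.

Definition complete (T : theory) : Prop :=
  (forall phi, T phi -> sentence phi) /\
  (exists M : structure, is_model T M) /\
  (forall phi, sentence phi -> entails T phi \/ entails T (Not phi)).

Definition T_equiv (T : theory) (phi psi : formula) : Prop :=
  forall M : structure, is_model T M -> forall s : nat -> M, sat s phi <-> sat s psi.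

(* a partition of the variables into x-variables (P v = true) and
   y-variables (P v = false); tuples a_i, b_j are given as assignments *)
Definition mix (M : structure) (P : nat -> bool) (a b : nat -> M) : nat -> M :=
  fun v => if P v then a v else b v.

Definition stable_for (T : theory) (P : nat -> bool) (phi : formula) : Prop :=
  forall M : structure, is_model T M ->
  forall a b : nat -> nat -> M,
    ~ (forall i j : nat, sat (mix P (a i) (b j)) phi <-> i <= j).

Definition stable_formula (T : theory) (phi : formula) : Prop :=
  forall P : nat -> bool, stable_for T P phi.

Definition stable_theory (T : theory) : Prop :=
  forall phi, stable_formula T phi.

Inductive bool_comb (S : formula -> Prop) : formula -> Prop :=
| bc_atom : forall p, S p -> bool_comb S p
| bc_not : forall p, bool_comb S p -> bool_comb S (Not p)
| bc_and : forall p q, bool_comb S p -> bool_comb S q -> bool_comb S (And p q)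
| bc_or : forall p q, bool_comb S p -> bool_comb S q -> bool_comb S (Or p q).

(* building blocks: formulas with at most n free variables, and formulas
   x ≈ y (the latter are only needed for n = 1; for n >= 2 they already
   have at most n free variables) *)
Definition nary_atom (n : nat) (phi : formula) : Prop :=
  has_at_most_free_vars n phi \/ exists x y : nat, phi = Eq (Var x) (Var y).

Definition nary_formula (T : theory) (n : nat) (phi : formula) : Prop :=
  exists psi, bool_comb (nary_atom n) psi /\ T_equiv T phi psi.

Definition nary_theory (T : theory) (n : nat) : Prop :=
  forall phi, nary_formula T n phi.

End FOL.

From mathcomp Require Import all_boot zify.
From Stdlib Require Import Classical ClassicalEpsilon.

Set Implicit Arguments.
Unset Strict Implicit.
Unset Printing Implicit Defensive.

(* A ladder [R i j <-> i <= j] for a conjunction or disjunction of two relations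
   contains, along subsequences, a ladder for one of them: colour the pairs of
   indices by the first relation, take a homogeneous set by Ramsey's theorem
   for pairs, and split it into its even and odd positions.  So stability under
   a fixed partition of the variables is preserved by Boolean combinations.  In
   an n-ary theory it therefore suffices to check formulas with at most n free
   variables, which become formulas with exactly n free variables after padding
   with conjuncts [z = z], and the literals [x = y] and [x <> y], which never
   carry a ladder. *)

Definition infinite (A : nat -> Prop) := forall N, exists2 y, N <= y & A y.

Lemma infinite_union (A B : nat -> Prop) :
  infinite (fun y => A y \/ B y) -> infinite A \/ infinite B.
Proof.
move=> infAB; apply: NNPP => /not_or_and[/not_all_ex_not[NA nA] /not_all_ex_not[NB nB]].
have [y le_Ny [Ay | By]] := infAB (maxn NA NB).
- by apply: nA; exists y => //; lia.
- by apply: nB; exists y => //; lia.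
Qed.

Lemma infinite_enum (A : nat -> Prop) :
  infinite A -> exists2 e : nat -> nat, {homo e : k m / k < m} & forall k, A (e k).
Proof.
move=> infA; have [next nextP] : exists next, forall N, N <= next N /\ A (next N).
  by apply: (choice (fun N y => N <= y /\ A y)) => N; have [y] := infA N; exists y.
have next_ge N : N <= next N by case: (nextP N).
pose e k := iter k (fun y => next y.+1) (next 0).
exists e; last by case=> [|k]; apply: (proj2 (nextP _)).
by apply: (homo_ltn ltn_trans) => k; apply: next_ge.
Qed.

Section Ramsey.
Variable c : nat -> nat -> Prop.

Lemma ramsey_step (A : {A : nat -> Prop | infinite A}) :
  exists p : nat * bool * {B : nat -> Prop | infinite B},
    sval A p.1.1 /\
    forall y, sval p.2 y -> [/\ sval A y, p.1.1 < y & c p.1.1 y <-> p.1.2].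
Proof.
case: A => A infA /=; have [x _ Ax] := infA 0.
have infAx : infinite (fun y => A y /\ x < y).
  move=> N; have [y le_Ny Ay] := infA (maxn N x.+1).
  by exists y; [lia | split=> //; lia].
have [infc | infnc] : infinite (fun y => (A y /\ x < y) /\ c x y) \/
                      infinite (fun y => (A y /\ x < y) /\ ~ c x y).
- apply: infinite_union => N; have [y le_Ny Axy] := infAx N.
  by exists y => //; case: (classic (c x y)); [left | right].
- by exists (x, true, exist _ _ infc) => /=; split=> // y [[]].
- by exists (x, false, exist _ _ infnc) => /=; split=> // y [[]].
Qed.

Lemma ramsey_end_homogeneous : exists (x : nat -> nat) (b : nat -> bool),
  forall k m, k < m -> x k < x m /\ (c (x k) (x m) <-> b k).
Proof.
have [step stepP] := choice _ ramsey_step.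
have infT : infinite (fun _ => True) by move=> N; exists N.
pose stage k := iter k (fun A => (step A).2) (exist _ _ infT).
exists (fun k => (step (stage k)).1.1), (fun k => (step (stage k)).1.2) => k m lt_km.
have stage_sub l y : k < l -> sval (stage l) y -> sval (stage k.+1) y.
  elim: l => // l IHl; rewrite ltnS leq_eqVlt => /orP[/eqP-> // | lt_kl] /=.
  by move=> /(proj2 (stepP (stage l))) [/(IHl lt_kl)].
have := stage_sub _ _ lt_km (proj1 (stepP (stage m))).
by move=> /(proj2 (stepP (stage k))) [].
Qed.

Lemma ramsey : exists2 h : nat -> nat, {homo h : x y / x < y} &
  (forall x y, x < y -> c (h x) (h y)) \/ (forall x y, x < y -> ~ c (h x) (h y)).
Proof.
have [x [b xbP]] := ramsey_end_homogeneous.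
have [b0 infb0] : exists b0, infinite (fun k => b k = b0).
  have [N | infb | infb] := @infinite_union (fun k => b k = true) (fun k => b k = false).
  - by exists N => //; case: (b N); [left | right].
  - by exists true.
  - by exists false.
have [e e_incr be] := infinite_enum infb0.
exists (fun k => x (e k)); first by move=> k m /e_incr /xbP[].
case: b0 {infb0} be => be; [left | right] => k m /e_incr /xbP[_].
- by rewrite be => cP; apply/cP.
- by rewrite be => cP /cP.
Qed.
End Ramsey.

Definition ladder (R : nat -> nat -> Prop) := forall i j, R i j <-> i <= j.

Lemma ladderP (R : nat -> nat -> Prop) :
  (forall i j, i <= j -> R i j) -> (forall i j, j < i -> ~ R i j) -> ladder R.
Proof.
move=> R_le R_gt i j; split=> [Rij | /R_le //].
by rewrite leqNgt; apply/negP => /R_gt.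
Qed.

Lemma ladder_interleave (R : nat -> nat -> Prop) (h : nat -> nat) :
  ladder R -> {homo h : x y / x < y} -> ladder (fun i j => R (h i.*2) (h j.*2.+1)).
Proof. by move=> lad h_incr i j; rewrite lad (leq_mono h_incr) leq_Sdouble. Qed.

Definition has_ladder (R : nat -> nat -> Prop) :=
  exists f g : nat -> nat, ladder (fun i j => R (f i) (g j)).

Lemma ladder_and (R1 R2 : nat -> nat -> Prop) :
  ladder (fun i j => R1 i j /\ R2 i j) -> has_ladder R1 \/ has_ladder R2.
Proof.
move=> lad; have [h h_incr R1_hom] := ramsey (fun x y => R1 y x).
have {}lad := ladder_interleave lad h_incr.
have odd_lt_even i j : j < i -> j.*2.+1 < i.*2 by rewrite ltn_Sdouble.
case: R1_hom => [R1_gt | nR1_gt]; [right | left];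
  exists (fun i => h i.*2), (fun j => h j.*2.+1); apply: ladderP => i j.
- by move=> /lad[].
- move=> lt_ji R2ij; have := (lad i j).1 (conj (R1_gt _ _ (odd_lt_even _ _ lt_ji)) R2ij).
  by rewrite leqNgt lt_ji.
- by move=> /lad[].
- by move=> /odd_lt_even /nR1_gt.
Qed.

Lemma ladder_or (R1 R2 : nat -> nat -> Prop) :
  ladder (fun i j => R1 i j \/ R2 i j) -> has_ladder R1 \/ has_ladder R2.
Proof.
move=> lad; have [h h_incr R1_hom] := ramsey R1.
have {}lad := ladder_interleave lad h_incr.
have even_lt_odd i j : i <= j -> i.*2 < j.*2.+1 by rewrite ltnS leq_double.
have nR_gt i j : j < i -> ~ (R1 (h i.*2) (h j.*2.+1) \/ R2 (h i.*2) (h j.*2.+1)).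
  by move=> lt_ji /lad; rewrite leqNgt lt_ji.
case: R1_hom => [R1_lt | nR1_lt]; [left | right];
  exists (fun i => h i.*2), (fun j => h j.*2.+1); apply: ladderP => i j.
- by move=> /even_lt_odd /R1_lt.
- by move=> /nR_gt nR R1ij; apply: nR; left.
- move=> le_ij; case: ((lad i j).2 le_ij) => // R1ij.
  by case: (nR1_lt _ _ (even_lt_odd _ _ le_ij)).
- by move=> /nR_gt nR R2ij; apply: nR; right.
Qed.

Lemma not_ladder_left (Q : nat -> Prop) : ~ ladder (fun i _ => Q i).
Proof. by move=> lad; have /(lad 1 0) := (lad 1 1).2 isT. Qed.

Lemma not_ladder_right (Q : nat -> Prop) : ~ ladder (fun _ j => Q j).
Proof. by move=> lad; have /(lad 1 0) := (lad 0 0).2 isT. Qed.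

Lemma not_ladder_eq (M : Type) (u v : nat -> M) : ~ ladder (fun i j => u i = v j).
Proof.
move=> lad; suff /(lad 1 0) : u 1 = v 0 by [].
by rewrite ((lad 1 1).2 isT) -((lad 0 1).2 isT) ((lad 0 0).2 isT).
Qed.

Lemma not_ladder_neq (M : Type) (u v : nat -> M) : ~ ladder (fun i j => u i <> v j).
Proof.
move=> lad; have eq_gt i j : j < i -> u i = v j.
  by move=> lt_ji; apply: NNPP => /lad; rewrite leqNgt lt_ji.
by apply: ((lad 1 1).2 isT); rewrite (eq_gt 1 0) // -(eq_gt 2 0) // (eq_gt 2 1).
Qed.

Section Stability.
Variables (L : signature) (T : theory L) (P : nat -> bool).

Lemma stable_for_T_equiv (phi psi : formula L) :
  T_equiv T phi psi -> stable_for T P psi -> stable_for T P phi.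
Proof.
by move=> eq_phi st_psi M MT a b lad; apply: (st_psi M MT a b) => i j; rewrite -lad eq_phi.
Qed.

Lemma stable_for_And (p q : formula L) :
  stable_for T P p -> stable_for T P q -> stable_for T P (And p q).
Proof.
move=> st_p st_q M MT a b /ladder_and[[f [g lad]] | [f [g lad]]].
- exact: st_p M MT _ _ lad.
- exact: st_q M MT _ _ lad.
Qed.

Lemma stable_for_Or (p q : formula L) :
  stable_for T P p -> stable_for T P q -> stable_for T P (Or p q).
Proof.
move=> st_p st_q M MT a b /ladder_or[[f [g lad]] | [f [g lad]]].
- exact: st_p M MT _ _ lad.
- exact: st_q M MT _ _ lad.
Qed.

Lemma stable_for_eq_var (x y : nat) :
  stable_for T P (Eq (Var L x) (Var L y)) /\ stable_for T P (Not (Eq (Var L x) (Var L y))).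
Proof.
rewrite /stable_for /= /mix; split=> M _ a b; case: (P x); case: (P y).
- exact: not_ladder_left.
- exact: not_ladder_eq.
- move=> lad; apply: (@not_ladder_eq M (a^~ y) (b^~ x)) => i j /=.
  by rewrite -lad; split=> ->.
- exact: not_ladder_right.
- exact: not_ladder_left.
- exact: not_ladder_neq.
- move=> lad; apply: (@not_ladder_neq M (a^~ y) (b^~ x)) => i j /=.
  by rewrite -lad; split=> ne /esym.
- exact: not_ladder_right.
Qed.

(* Negations are carried along: without compactness, a ladder for [Not p]
   cannot be turned into a ladder for [p]. *)
Lemma bool_comb_stable_for (S : formula L -> Prop) (psi : formula L) :
  (forall p, S p -> stable_for T P p /\ stable_for T P (Not p)) ->
  bool_comb S psi -> stable_for T P psi /\ stable_for T P (Not psi).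
Proof.
move=> st_S; elim=> {psi} [p /st_S // | p _ [st_p st_np] | p q _ [st_p st_np] _ [st_q st_nq]
                          | p q _ [st_p st_np] _ [st_q st_nq]].
- split=> //; apply: stable_for_T_equiv st_p => M _ s /=.
  by split=> [/NNPP | ?]; last tauto.
- split; first exact: stable_for_And.
  apply: stable_for_T_equiv (stable_for_Or st_np st_nq) => M _ s /=.
  by split=> [/not_and_or | ]; tauto.
- split; first exact: stable_for_Or.
  apply: stable_for_T_equiv (stable_for_And st_np st_nq) => M _ s /=; tauto.
Qed.

End Stability.

Section FreeVariables.
Variable L : signature.

Lemma occurs_Var (v x : nat) : occurs_term v (Var L x) <-> v = x.
Proof. by split=> [occ | ->]; [inversion occ | constructor]. Qed.

Lemma free_in_Eq (v : nat) (t u : term L) :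
  free_in v (Eq t u) <-> occurs_term v t \/ occurs_term v u.
Proof.
split=> [fr | [occ | occ]]; [by inversion fr; [left | right] | exact: fr_eql | exact: fr_eqr].
Qed.

Lemma free_in_Not (v : nat) (p : formula L) : free_in v (Not p) <-> free_in v p.
Proof. by split=> [fr | ?]; [inversion fr | constructor]. Qed.

Lemma free_in_And (v : nat) (p q : formula L) :
  free_in v (And p q) <-> free_in v p \/ free_in v q.
Proof.
split=> [fr | [fr | fr]]; [by inversion fr; [left | right] | exact: fr_andl | exact: fr_andr].
Qed.

Lemma has_at_most_free_vars_Not (n : nat) (p : formula L) :
  has_at_most_free_vars n p -> has_at_most_free_vars n (Not p).
Proof. by case=> l [size_l fv_l]; exists l; split=> // v /free_in_Not /fv_l. Qed.

Lemma has_at_most_free_vars_uniq (n : nat) (phi : formula L) :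
  has_at_most_free_vars n phi ->
  exists F, [/\ uniq F, size F <= n & forall v, free_in v phi <-> v \in F].
Proof.
case=> l [size_l fv_l].
pose isfree v := if excluded_middle_informative (free_in v phi) then true else false.
have isfreeP v : reflect (free_in v phi) (isfree v).
  by rewrite /isfree; case: excluded_middle_informative; constructor.
exists [seq v <- undup l | isfree v]; split.
- exact/filter_uniq/undup_uniq.
- by rewrite size_filter (leq_trans (count_size _ _)) // (leq_trans (size_undup l)).
- move=> v; rewrite mem_filter mem_undup.
  by split=> [fr | /andP[/isfreeP]//]; rewrite fv_l // andbT; apply/isfreeP.
Qed.

Definition pad_vars (phi : formula L) (Z : seq nat) : formula L :=
  foldr (fun z psi => And psi (Eq (Var L z) (Var L z))) phi Z.

Lemma sat_pad_vars (M : structure L) (s : nat -> M) (phi : formula L) (Z : seq nat) :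
  sat s (pad_vars phi Z) <-> sat s phi.
Proof. by elim: Z => //= z Z ->; tauto. Qed.

Lemma free_in_pad_vars (v : nat) (phi : formula L) (Z : seq nat) :
  free_in v (pad_vars phi Z) <-> free_in v phi \/ v \in Z.
Proof.
elim: Z => [|z Z IH] /=; first by split; [left | case].
rewrite free_in_And free_in_Eq occurs_Var IH in_cons -(rwP orP) -(rwP eqP); tauto.
Qed.

Lemma has_free_vars_pad (n : nat) (phi : formula L) :
  has_at_most_free_vars n phi -> exists Z, has_free_vars n (pad_vars phi Z).
Proof.
move=> /has_at_most_free_vars_uniq[F [uniq_F size_F fv_F]].
pose Z := iota (\max_(v <- F) v).+1 (n - size F).
have fresh_Z : ~~ has (mem F) Z.
  apply/hasPn => v; rewrite mem_iota => /andP[lt_v _]; apply/negP => /= vF.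
  by have := @leq_bigmax_seq _ _ xpredT id _ vF isT; rewrite leqNgt lt_v.
exists Z, (F ++ Z); split; [|split].
- by rewrite cat_uniq uniq_F iota_uniq andbT.
- by rewrite size_cat size_iota subnKC.
- by move=> v; rewrite free_in_pad_vars fv_F mem_cat; exact: rwP orP.
Qed.

End FreeVariables.

Lemma stable_at_most_free_vars (L : signature) (T : theory L) (n : nat) :
  (forall phi : formula L, has_free_vars n phi -> stable_formula T phi) ->
  forall phi, has_at_most_free_vars n phi -> stable_formula T phi.
Proof.
move=> st_n phi /has_free_vars_pad[Z /st_n st_pad] P.
by apply: stable_for_T_equiv (st_pad P) => M _ s; rewrite sat_pad_vars.
Qed.

Theorem theorem1p14 (L : signature) (n : nat) (T : theory L) :
  1 <= n -> complete T -> nary_theory T n ->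
  (stable_theory T <-> forall phi : formula L, has_free_vars n phi -> stable_formula T phi).
Proof.
move=> _ _ nary; split=> [stT phi _ | st_n phi P]; first exact: stT.
have [psi [comb_psi eq_psi]] := nary phi.
apply: stable_for_T_equiv eq_psi _.
apply: (proj1 (bool_comb_stable_for _ comb_psi)) => p [p_small | [x [y ->]]].
- split; apply: (stable_at_most_free_vars st_n) => //.
  exact: has_at_most_free_vars_Not.
- exact: stable_for_eq_var.
Qed.
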